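(* Let $n\ge 2$. For $T\in\mathrm{SYT}^{+k}((b,b))$ with $b\ge1$, $k\ge0$, $2b+k=n$, define the word $\alpha(T)$ as follows. The largest entry $n$ lies in the bottom-right cell; delete it. For $j=1,\dots,b$ let $A_j$ be the set in the top cell of column $j$ and $B_j$ the set in the bottom cell of column $j$ (with $n$ removed when $j=b$; $B_b$ may become empty). Then $\alpha(T)$ is the concatenation, for $j=1,\dots,b$ in order, of: the elements of $A_j\setminus\{\max A_j\}$ in increasing order, followed by the elements of $B_j$ in increasing order, followed by $\max A_j$. Then: (1) $\alpha$ is a bijection from $\bigsqcup_{b\ge1,k\ge0,\,2b+k=n}\mathrm{SYT}^{+k}((b,b))$ onto the set of $321$-avoiding permutations of $[n-1]$; (2) the set of entries in the top row of $T$ equals the set of values of the right-to-left minima of $\alpha(T)$; (3) if $T$ has $b$ columns, then $\alpha(T)$ has exactly $b-1$ inner valleys.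
   Context: $\mathrm{SYT}^{+k}(\lambda)$: for a partition $\lambda$ of $N$ and $k\ge 0$, the set of fillings $S$ of the cells of the Ferrers diagram of $\lambda$ by nonempty sets of positive integers forming a set partition of $[N+k]$, such that $\max S(u)<\min S(v)$ whenever $u\ne v$ and $u$ is weakly northwest of $v$. A permutation $\pi=\pi_1\cdots\pi_m$ is $321$-avoiding if there are no $i<j<l$ with $\pi_i>\pi_j>\pi_l$. $\pi_i$ is a right-to-left minimum if $\pi_i<\pi_j$ for all $j>i$. An inner valley of $\pi$ is an entry $\pi_j$ with $1<j<m$ and $\pi_{j-1}>\pi_j<\pi_{j+1}$. *)

From mathcomp Require Import all_boot.
From mathcomp Require Import finmap.
Set Implicit Arguments. Unset Strict Implicit. Unset Printing Implicit Defensive.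
Local Open Scope fset_scope.

(* A filling of a Ferrers diagram (English convention, row 0 on top):
   T is the list of rows, row r is the list of its cells (columns 0,1,...),
   each cell contains a finite set of naturals. *)
Definition filling := seq (seq {fset nat}).

Definition cell (T : filling) (r c : nat) : {fset nat} :=
  nth fset0 (nth [::] T r) c.

Definition in_diagram (lam : seq nat) (r c : nat) : bool :=
  (r < size lam) && (c < nth 0 lam r).

Definition SYTplus (lam : seq nat) (k : nat) (T : filling) : Prop :=
  let N := sumn lam in
  [/\ map size T = lam,
      (forall r c, in_diagram lam r c -> cell T r c != fset0),
      (forall r1 c1 r2 c2, in_diagram lam r1 c1 -> in_diagram lam r2 c2 ->
         (r1, c1) <> (r2, c2) -> cell T r1 c1 `&` cell T r2 c2 = fset0),
      (forall x, (1 <= x <= N + k) <->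
         exists r c, in_diagram lam r c /\ x \in cell T r c)
    &
      (forall r1 c1 r2 c2, in_diagram lam r1 c1 -> in_diagram lam r2 c2 ->
         (r1, c1) <> (r2, c2) -> r1 <= r2 -> c1 <= c2 ->
         forall x y, x \in cell T r1 c1 -> y \in cell T r2 c2 -> x < y)].

(* maximum of a finite set of naturals (0 for the empty set) *)
Definition fmax (A : {fset nat}) : nat := \max_(x <- A) x.

Definition incr (A : {fset nat}) : seq nat := sort leq A.

(* The word alpha(T) for a two-row filling T = [:: top; bottom] whose largest
   entry is n (n is passed explicitly).  For column j (0-based here):
   A_j = top cell, B_j = bottom cell (with n removed in the last column);
   output incr(A_j \ max A_j) ++ incr(B_j) ++ [max A_j]. *)
Definition alpha (n : nat) (T : filling) : seq nat :=
  let b := size (nth [::] T 0) in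
  flatten [seq
    let A := cell T 0 j in
    let B := if j == b.-1 then cell T 1 j `\ n else cell T 1 j in
    incr (A `\ fmax A) ++ incr B ++ [:: fmax A]
  | j <- iota 0 b].

(* words: p is a permutation of [m] = {1,...,m} in one-line notation *)
Definition is_perm_of (m : nat) (p : seq nat) : Prop := perm_eq p (iota 1 m).

Definition avoids321 (p : seq nat) : Prop :=
  forall i j l, i < j -> j < l -> l < size p ->
    ~ (nth 0 p j < nth 0 p i /\ nth 0 p l < nth 0 p j).

Definition rl_minima (p : seq nat) : seq nat :=
  [seq nth 0 p i | i <- iota 0 (size p) &
     all (fun j => nth 0 p i < nth 0 p j) (iota i.+1 (size p - i.+1))].

(* number of inner valleys: positions 1 < j < m (1-based), i.e. 0 < j < m-1
   (0-based), with p_{j-1} > p_j < p_{j+1} *)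
Definition inner_valleys (p : seq nat) : nat :=
  count (fun j => (nth 0 p j < nth 0 p j.-1) && (nth 0 p j < nth 0 p j.+1))
        (iota 1 (size p).-2).

From mathcomp Require Import all_boot.
From mathcomp Require Import finmap.
From mathcomp Require Import zify.
Set Implicit Arguments. Unset Strict Implicit. Unset Printing Implicit Defensive.

(* Reading a tableau T of shape (b,b) column by column, alpha(T) is the
   concatenation of the column words (A_j minus a_j) B_j a_j, where the pivot
   a_j is the largest entry of the top cell A_j.  The tableau inequalities say
   exactly that each column word increases and then drops onto its pivot, that
   a_j lies below every later entry, and that the bottom entries increase along
   the word.  So the column words are the segments obtained by cutting alpha(T)
   right after each descent, and T can be read back from alpha(T); conversely,
   321-avoidance forces these three properties on the segments of any
   permutation cut at its descents.  A top entry is smaller than everything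
   after it, while a bottom entry is followed by the smaller pivot of its
   column: the top row consists of the right-to-left minima.  Finally the inner
   valleys are the pivots a_1, ..., a_(b-1). *)

(** * Column words *)

(* A column is encoded by its body, listing A minus its maximum and then B, and
   its pivot, the maximum of A; top and bottom entries are told apart by
   comparison with the pivot. *)
Definition column := (seq nat * nat)%type.

Definition col_seq (c : column) : seq nat := rcons c.1 c.2.
Definition col_top (c : column) : seq nat := [seq x <- col_seq c | x <= c.2].
Definition col_bot (c : column) : seq nat := [seq x <- c.1 | c.2 < x].
Definition word (cs : seq column) : seq nat := flatten (map col_seq cs).

Lemma word_cons c cs : word (c :: cs) = col_seq c ++ word cs.
Proof. by []. Qed.

(* With a sorted body, the first conjunct says that the bottom cell of [c] is
   nonempty. *)
Definition col_before (c c' : column) : bool :=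
  [&& c.2 < last c.2 c.1, all (fun y => c.2 < y) (col_seq c')
    & allrel ltn (col_bot c) (col_bot c')].

Definition good_cols (cs : seq column) : bool :=
  all (fun c => sorted ltn c.1) cs && pairwise col_before cs.

Lemma good_cols_cons c cs :
  good_cols (c :: cs) = [&& sorted ltn c.1, all (col_before c) cs & good_cols cs].
Proof. by rewrite /good_cols /= -!andbA; congr (_ && _); rewrite andbCA. Qed.

Lemma mem_col_seq c x : (x \in col_seq c) = (x == c.2) || (x \in c.1).
Proof. by rewrite mem_rcons inE. Qed.

Lemma mem_col_bot c x : (x \in col_bot c) = (x \in col_seq c) && (c.2 < x).
Proof.
rewrite mem_filter mem_col_seq andbC.
by case: eqP => [->|]; rewrite ?ltnn ?andbF.
Qed.

Lemma pairwise_flatten (T : Type) (r : rel T) (ss : seq (seq T)) :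
  all (pairwise r) ss -> pairwise (allrel r) ss -> pairwise r (flatten ss).
Proof.
elim: ss => //= s ss IH /andP [r_s r_ss] /andP [r_s_ss pw_ss].
rewrite pairwise_cat r_s IH // andbT.
elim: ss r_s_ss {IH r_ss pw_ss} => [|s' ss IH /andP [r_s_s' r_s_ss]].
  by rewrite allrel0r.
by rewrite /= allrel_catr r_s_s' IH.
Qed.

Lemma uniq_flatten_all (T : eqType) (ss : seq (seq T)) : uniq (flatten ss) -> all uniq ss.
Proof. by elim: ss => //= s ss IH; rewrite cat_uniq => /and3P [-> _ /IH]. Qed.

(** * Tagging the top row: 321-avoidance and right-to-left minima *)

(* The tag [true] marks the entries lying in the top row. *)
Definition tag_col (c : column) : seq (nat * bool) := [seq (x, x <= c.2) | x <- col_seq c].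
Definition tagged_word (cs : seq column) : seq (nat * bool) := flatten (map tag_col cs).

Definition tag_order (u v : nat * bool) : bool :=
  (u.2 ==> (u.1 < v.1)) && (~~ u.2 && ~~ v.2 ==> (u.1 < v.1)).

Lemma map_fst_tagged_word cs : map fst (tagged_word cs) = word cs.
Proof. by elim: cs => //= c cs IH; rewrite map_cat IH -map_comp map_id. Qed.

Lemma tag_col_order c :
  sorted ltn c.1 -> uniq (col_seq c) -> pairwise tag_order (tag_col c).
Proof.
move=> sorted_c; rewrite rcons_uniq => /andP [pivot_new _].
rewrite pairwise_map pairwise_rcons; apply/andP; split.
  apply/allP => x x_in; rewrite /tag_order /= leqnn andbF andbT /=.
  by apply/implyP; rewrite leq_eqVlt => /predU1P [x_eq|//]; rewrite -x_eq x_in in pivot_new.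
move: sorted_c; rewrite (sorted_pairwise ltn_trans).
by apply: sub_pairwise => x y /= x_lt_y; rewrite /tag_order /= x_lt_y !implybT.
Qed.

Lemma tag_col_before c c' : col_before c c' -> allrel tag_order (tag_col c) (tag_col c').
Proof.
case/and3P => _ /allP later_gt /allrelP bot_lt; rewrite allrel_mapl allrel_mapr.
apply/allrelP => x y x_c y_c'; rewrite /tag_order /=; apply/andP; split.
  by apply/implyP => x_top; exact: leq_ltn_trans x_top (later_gt y y_c').
apply/implyP; rewrite -!ltnNge => /andP [x_bot y_bot].
by apply: bot_lt; rewrite mem_col_bot ?x_c ?y_c'.
Qed.

Lemma tagged_word_order cs :
  good_cols cs -> uniq (word cs) -> pairwise tag_order (tagged_word cs).
Proof.
case/andP => sorted_cs before_cs /uniq_flatten_all; rewrite all_map => uniq_cs.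
apply: pairwise_flatten.
  rewrite all_map; apply/allP => c c_cs.
  by apply: tag_col_order; [apply: (allP sorted_cs) | apply: (allP uniq_cs)].
by rewrite pairwise_map; apply: sub_pairwise before_cs => c c'; exact: tag_col_before.
Qed.

Lemma tag_order_avoids321 s : pairwise tag_order s -> avoids321 (map fst s).
Proof.
move=> pw i j l i_lt_j j_lt_l; rewrite size_map => l_lt.
have j_lt : j < size s by apply: ltn_trans l_lt.
have i_lt : i < size s by apply: ltn_trans j_lt.
rewrite !(nth_map (0, false)) //.
move: (pairwiseP (0, false) pw i j i_lt j_lt i_lt_j) (pairwiseP (0, false) pw j l j_lt l_lt j_lt_l).
rewrite /tag_order; case: (nth _ s i) => x [] ; case: (nth _ s j) => y [];
  case: (nth _ s l) => z tz /=; lia.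
Qed.

Fixpoint untagged_exceed_later (s : seq (nat * bool)) : bool :=
  if s is u :: s' then (u.2 || has (fun v => v.1 < u.1) s') && untagged_exceed_later s'
  else true.

Lemma untagged_exceed_later_cat s1 s2 :
  untagged_exceed_later s1 -> untagged_exceed_later s2 -> untagged_exceed_later (s1 ++ s2).
Proof.
elim: s1 => //= u s1 IH /andP [u_ok s1_ok] s2_ok; rewrite IH // andbT has_cat.
by case/orP: u_ok => ->; rewrite ?orbT.
Qed.

Lemma untagged_exceed_later_tagged_word cs : untagged_exceed_later (tagged_word cs).
Proof.
elim: cs => //= [[body a]] cs IH; apply: untagged_exceed_later_cat => //.
rewrite /tag_col /col_seq /=; elim: body => /= [|x body ->]; first by rewrite leqnn.
rewrite andbT; case: leqP => //= a_lt_x; apply/hasP; exists (a, a <= a) => //.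
by apply/map_f; rewrite mem_rcons mem_head.
Qed.

Lemma tag_rl_minimum s i :
  pairwise tag_order s -> untagged_exceed_later s -> i < size s ->
  all (fun v => (nth (0, false) s i).1 < v.1) (drop i.+1 s) = (nth (0, false) s i).2.
Proof.
elim: s i => // u s IH [|i] /= /andP [u_before pw] /andP [u_ok ok] i_lt; last by rewrite IH.
rewrite drop0; case: (boolP u.2) => u_top.
  by apply/allP => v v_s; case/andP: (allP u_before v v_s); rewrite u_top.
move: u_ok; rewrite (negbTE u_top) => /hasP [v v_s v_lt].
by apply/negbTE/negP => /allP /(_ v v_s); rewrite ltnNge ltnW.
Qed.

Lemma mem_rl_minima p x :
  reflect (exists2 i, i < size p & nth 0 p i = x /\ all (fun y => x < y) (drop i.+1 p))
          (x \in rl_minima p).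
Proof.
have all_drop i : all (fun j => nth 0 p i < nth 0 p j) (iota i.+1 (size p - i.+1)) =
                  all (fun y => nth 0 p i < y) (drop i.+1 p).
  by rewrite -[in RHS](take_size (drop i.+1 p)) size_drop -(map_nth_iota 0) // all_map.
apply: (iffP mapP) => [[i] | [i i_lt [<- min_i]]].
  by rewrite mem_filter mem_iota all_drop => /and3P [min_i _ i_lt] ->; exists i.
by exists i => //; rewrite mem_filter mem_iota all_drop min_i i_lt.
Qed.

Lemma rl_minima_tagged s x :
  pairwise tag_order s -> untagged_exceed_later s ->
  (x \in rl_minima (map fst s)) = ((x, true) \in s).
Proof.
move=> pw ok; have rlmin := tag_rl_minimum pw ok.
have fst_nth i : i < size s -> nth 0 (map fst s) i = (nth (0, false) s i).1.
  by move=> i_lt; rewrite (nth_map (0, false)).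
apply/mem_rl_minima/idP => [[i] | x_top].
  rewrite size_map => i_lt [<-]; rewrite -map_drop all_map fst_nth // => min_i.
  have top_i : (nth (0, false) s i).2 by rewrite -rlmin.
  have := mem_nth (0, false) i_lt.
  by case: (nth _ s i) top_i => y [].
have i_lt : index (x, true) s < size s by rewrite index_mem.
exists (index (x, true) s); rewrite ?size_map // fst_nth // nth_index //.
by split => //; rewrite -map_drop all_map; have := rlmin _ i_lt; rewrite nth_index.
Qed.

Lemma mem_tagged_word cs x :
  ((x, true) \in tagged_word cs) = has (fun c => x \in col_top c) cs.
Proof.
elim: cs => //= c cs IH; rewrite mem_cat IH mem_filter andbC; congr (_ || _).
apply/mapP/andP => [[y y_c [-> top_y]] | [x_c x_top]]; first by rewrite y_c -top_y.
by exists x; rewrite ?x_top.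
Qed.

Lemma avoids321_word cs : good_cols cs -> uniq (word cs) -> avoids321 (word cs).
Proof.
move=> good_cs uniq_cs; rewrite -map_fst_tagged_word.
exact/tag_order_avoids321/tagged_word_order.
Qed.

Lemma rl_minima_word cs x : good_cols cs -> uniq (word cs) ->
  (x \in rl_minima (word cs)) = has (fun c => x \in col_top c) cs.
Proof.
move=> good_cs uniq_cs; rewrite -map_fst_tagged_word rl_minima_tagged ?mem_tagged_word //.
  exact: tagged_word_order.
exact: untagged_exceed_later_tagged_word.
Qed.

(** * Valleys *)

Fixpoint valleys (s : seq nat) : nat :=
  match s with
  | x :: ((y :: z :: _) as t) => ((y < x) && (y < z)) + valleys t
  | _ => 0
  end.

Lemma inner_valleysE p : inner_valleys p = valleys p.
Proof.
elim: p => // x [|y [|z t]] IH //.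
have -> : valleys [:: x, y, z & t] = (y < x) && (y < z) + valleys [:: y, z & t] by [].
rewrite -IH /inner_valleys.
rewrite [(size _).-2]/= [iota 1 _]/= [count _ (1 :: _)]/= -[2]/(1 + 1) iotaDl count_map.
by congr (_ + _); apply: eq_in_count => -[|j]; rewrite mem_iota.
Qed.

Lemma valleys_ascent x y t : x < y -> valleys (x :: y :: t) = valleys (y :: t).
Proof. by case: t => // z t x_lt_y /=; rewrite ltnNge (ltnW x_lt_y). Qed.

Lemma valleys_run s a : sorted ltn s -> valleys (rcons s a) = 0.
Proof.
elim: s => // x [|x' s] IH // /andP [x_lt_x' sorted_s].
by rewrite !rcons_cons valleys_ascent // -rcons_cons IH.
Qed.

Lemma valleys_descent s a y t : sorted ltn s -> a < last a s -> a < y ->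
  valleys (rcons s a ++ y :: t) = (valleys (y :: t)).+1.
Proof.
elim: s => [|x [|x' s] IH]; first by rewrite ltnn.
  move=> _ a_lt_x a_lt_y; rewrite [_ ++ _]/=.
  have -> : valleys [:: x, a, y & t] = (a < x) && (a < y) + valleys [:: a, y & t] by [].
  by rewrite a_lt_x a_lt_y valleys_ascent.
move=> /andP [x_lt_x' sorted_s] descent a_lt_y.
by rewrite !rcons_cons !cat_cons valleys_ascent // -cat_cons -rcons_cons IH.
Qed.

Lemma word_after c cs : all (col_before c) cs -> all (fun y => c.2 < y) (word cs).
Proof.
move=> /allP before; apply/allP => y /flatten_mapP [c' /before /and3P [_ /allP later _]].
exact: later.
Qed.

Lemma valleys_word cs : good_cols cs -> valleys (word cs) = (size cs).-1.
Proof.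
elim: cs => // c [|c' cs] IH; rewrite good_cols_cons => /and3P [sorted_c before_c good_cs].
  by rewrite /word /= cats0 valleys_run.
have /andP [/and3P [descent _ _] _] := before_c.
have /allP after := word_after before_c.
move: (IH good_cs) after; rewrite [word (c :: _)]word_cons.
case E: (word (c' :: cs)) => [|y t]; first by move: E; rewrite word_cons /col_seq; case: (c'.1).
by move=> valleys_t after; rewrite /col_seq valleys_descent ?valleys_t // after ?mem_head.
Qed.

Lemma size_word_good cs : good_cols cs -> (size cs).*2 <= (size (word cs)).+1.
Proof.
elim: cs => // c cs IH; rewrite good_cols_cons word_cons size_cat size_rcons.
case/and3P => _ before_c /IH {IH}; case: cs before_c => [|c' cs] before_c IHcs /=; first by lia.
have [/and3P [descent _ _] _] := andP before_c.
have : 0 < size c.1 by case: (c.1) descent => //=; rewrite ltnn.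
by move: IHcs; rewrite /=; lia.
Qed.

(** * Cutting a word after its descents *)

Fixpoint split_col (s : seq nat) : column * seq nat :=
  match s with
  | [::] => (([::], 0), [::])
  | [:: x] => (([::], x), [::])
  | x :: ((y :: s'') as s') =>
      if y < x then (([:: x], y), s'')
      else let: (c, r) := split_col s' in ((x :: c.1, c.2), r)
  end.

(* Each round consumes at least one letter, so [size s] rounds suffice. *)
Fixpoint cols_rec (fuel : nat) (s : seq nat) : seq column :=
  if fuel is f.+1 then
    if s is [::] then [::] else let: (c, r) := split_col s in c :: cols_rec f r
  else [::].

Definition cols_of (s : seq nat) : seq column := cols_rec (size s) s.

Lemma cols_rec_succ f s : s != [::] ->
  cols_rec f.+1 s = let: (c, r) := split_col s in c :: cols_rec f r.
Proof. by case: s. Qed.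

Lemma split_col_cons2 x y s : split_col [:: x, y & s] =
  if y < x then (([:: x], y), s) else let: (c, r) := split_col (y :: s) in ((x :: c.1, c.2), r).
Proof. by []. Qed.

Lemma split_colP s c r : split_col s = (c, r) -> s != [::] ->
  [/\ s = col_seq c ++ r, sorted leq c.1 & (r != [::] -> c.2 < last c.2 c.1)].
Proof.
elim: s c r => // x [|y s] IH c r + _; first by case=> <- <-.
rewrite split_col_cons2; case: ifP => [_ [<- <-] // | y_le_x].
case E: (split_col (y :: s)) => [[body a] r'] [<- <-].
have [s_eq sorted_body descent] := IH _ _ E isT; clear E.
split; first by rewrite s_eq.
  case: body s_eq sorted_body {descent} => // z body [<- _] /= sorted_body.
  by rewrite leqNgt y_le_x.
case: body {s_eq sorted_body} descent => [|z body] //= descent r_nil.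
by move: (descent r_nil); rewrite ltnn.
Qed.

Lemma split_col_cat c r : sorted ltn c.1 -> (r != [::] -> c.2 < last c.2 c.1) ->
  split_col (col_seq c ++ r) = (c, r).
Proof.
case: c => body a; rewrite /col_seq /=; elim: body => [|x body IH].
  by case: r => // y r _ /(_ isT); rewrite ltnn.
case: body IH => [|x' body] IH sorted_body descent.
  rewrite [_ ++ _]/= split_col_cons2; case: ifP => // a_ge_x.
  by case: r {IH} descent => [|y r] descent //; rewrite (descent isT) in a_ge_x.
move: sorted_body => /andP [x_lt_x' sorted_body].
by rewrite [_ ++ _]/= split_col_cons2 leq_gtF ?(ltnW x_lt_x') // -cat_cons -rcons_cons IH.
Qed.

Lemma word_cols_rec f s : size s <= f -> word (cols_rec f s) = s.
Proof.
elim: f s => [|f IH] [|x s] // size_s; rewrite cols_rec_succ //.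
case E: (split_col (x :: s)) => [c r]; have [s_eq _ _] := split_colP E isT.
rewrite word_cons IH; first by rewrite s_eq.
by move: size_s; rewrite s_eq size_cat /col_seq size_rcons; lia.
Qed.

Lemma word_cols_of s : word (cols_of s) = s.
Proof. exact: word_cols_rec. Qed.

Lemma col_seq_neq0 c r : col_seq c ++ r != [::].
Proof. by rewrite -size_eq0 size_cat size_rcons. Qed.

Lemma size_word cs : size cs <= size (word cs).
Proof. by elim: cs => // c cs IH; rewrite word_cons size_cat size_rcons /=; lia. Qed.

Lemma cols_rec_word f cs : size cs <= f -> good_cols cs -> cols_rec f (word cs) = cs.
Proof.
elim: cs f => [|c cs IH] [|f] // size_cs; rewrite good_cols_cons.
case/and3P => sorted_c before_c good_cs.
rewrite word_cons cols_rec_succ ?col_seq_neq0 // split_col_cat ?IH //.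
case: cs before_c {IH good_cs size_cs} => // c' cs /andP [/and3P [descent _ _] _] _.
exact: descent.
Qed.

Lemma cols_of_word cs : good_cols cs -> cols_of (word cs) = cs.
Proof. exact/cols_rec_word/size_word. Qed.

Lemma avoids321_suffix s1 s2 : avoids321 (s1 ++ s2) -> avoids321 s2.
Proof.
move=> avoid i j l i_lt_j j_lt_l l_lt.
have := avoid (size s1 + i) (size s1 + j) (size s1 + l).
rewrite !nth_cat size_cat !ltnNge !leq_addr /= !addKn; apply; lia.
Qed.

Lemma avoids321_cat3 s1 s2 s3 x y z : avoids321 (s1 ++ s2 ++ s3) ->
  x \in s1 -> y \in s2 -> z \in s3 -> ~ (y < x /\ z < y).
Proof.
move=> avoid x_s1 y_s2 z_s3.
have ix : index x s1 < size s1 by rewrite index_mem.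
have iy : index y s2 < size s2 by rewrite index_mem.
have iz : index z s3 < size s3 by rewrite index_mem.
have e1 : nth 0 (s1 ++ s2 ++ s3) (index x s1) = x by rewrite nth_cat ix nth_index.
have e2 : nth 0 (s1 ++ s2 ++ s3) (size s1 + index y s2) = y.
  by rewrite nth_cat ltnNge leq_addr /= addKn nth_cat iy nth_index.
have e3 : nth 0 (s1 ++ s2 ++ s3) (size s1 + (size s2 + index z s3)) = z.
  by rewrite nth_cat ltnNge leq_addr /= addKn nth_cat ltnNge leq_addr /= addKn nth_index.
have := avoid (index x s1) (size s1 + index y s2) (size s1 + (size s2 + index z s3)).
rewrite e1 e2 e3 !size_cat; apply; lia.
Qed.

Lemma avoids321_pivot body a r z :
  avoids321 (col_seq (body, a) ++ r) -> a < last a body -> z \in r -> a <= z.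
Proof.
move=> avoid descent z_r; rewrite leqNgt; apply/negP => z_lt_a.
have last_body : last a body \in body.
  by move: (mem_last a body); rewrite inE => /predU1P [last_a|//]; rewrite last_a ltnn in descent.
have avoid' : avoids321 (body ++ [:: a] ++ r) by rewrite cat1s -cat_rcons.
exact: avoids321_cat3 avoid' last_body (mem_head a [::]) z_r (conj descent z_lt_a).
Qed.

Lemma avoids321_bot s1 cs v c' w :
  avoids321 (s1 ++ word cs) -> v \in s1 -> c' \in cs -> w \in col_bot c' -> v <= w.
Proof.
elim: cs s1 => // c cs IH s1 avoid v_s1; rewrite inE => /predU1P [-> | c'_cs] w_bot.
  move: w_bot; rewrite mem_filter => /andP [pivot_lt_w w_body].
  rewrite leqNgt; apply/negP => w_lt_v.
  rewrite word_cons /col_seq cat_rcons in avoid.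
  exact: avoids321_cat3 avoid v_s1 w_body (mem_head c.2 (word cs)) (conj w_lt_v pivot_lt_w).
by apply: (IH (s1 ++ col_seq c)); rewrite ?mem_cat ?v_s1 // -catA.
Qed.

Lemma good_cols_rec f s : size s <= f -> uniq s -> avoids321 s -> good_cols (cols_rec f s).
Proof.
elim: f s => [|f IH] [|x s] // size_s uniq_s avoid_s.
rewrite cols_rec_succ //; case E: (split_col (x :: s)) => [c r].
have [s_eq sorted_c descent] := split_colP E isT.
rewrite {x s E}s_eq in size_s uniq_s avoid_s.
have size_r : size r <= f.
  by move: size_s; rewrite size_cat /col_seq size_rcons addSn ltnS; apply/leq_trans/leq_addl.
have word_r := word_cols_rec size_r.
move: uniq_s; rewrite cat_uniq => /and3P [uniq_c /hasPn r_new uniq_r].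
have later_gt z : z \in r -> c.2 < z.
  move=> z_r; rewrite ltn_neqAle (avoids321_pivot avoid_s _ z_r) ?andbT ?descent //;
    last by case: (r) z_r.
  by apply: contraNneq (r_new z z_r) => <-; rewrite mem_rcons mem_head.
rewrite good_cols_cons IH ?andbT //; last exact: avoids321_suffix avoid_s.
apply/andP; split.
  rewrite ltn_sorted_uniq_leq sorted_c andbT.
  by move: uniq_c; rewrite /col_seq rcons_uniq => /andP [].
apply/allP => c' c'_r; apply/and3P; split.
- by apply: descent; apply: contraTneq c'_r => ->; case: (f).
- by apply/allP => y y_c'; apply: later_gt; rewrite -word_r; apply/flatten_mapP; exists c'.
apply/allrelP => v w v_bot w_bot /=.
have v_c : v \in col_seq c by move: v_bot; rewrite mem_col_bot => /andP [].
rewrite ltn_neqAle (avoids321_bot _ v_c c'_r w_bot) ?word_r // andbT.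
apply: contraTneq (v_c) => ->; apply: r_new; rewrite -word_r; apply/flatten_mapP; exists c' => //.
by move: w_bot; rewrite mem_col_bot => /andP [].
Qed.

Lemma good_cols_of s : uniq s -> avoids321 s -> good_cols (cols_of s).
Proof. exact: good_cols_rec. Qed.

(** * Fillings from columns *)

Local Open Scope fset_scope.

Lemma fmax_ge (A : {fset nat}) y : y \in A -> y <= fmax A.
Proof. by move=> y_A; apply: leq_bigmax_seq. Qed.

Lemma fmaxE (A : {fset nat}) a : a \in A -> {in A, forall y, y <= a} -> fmax A = a.
Proof.
move=> a_A a_max; apply/eqP; rewrite eqn_leq fmax_ge // andbT.
by apply/bigmax_leqP_seq => y y_A _; apply: a_max.
Qed.

Lemma bigmax_seq_mem (s : seq nat) : s != [::] -> \max_(x <- s) x \in s.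
Proof.
elim: s => // x [|y s] IH _; first by rewrite big_seq1 mem_head.
by rewrite big_cons inE /maxn; case: ltnP => _; rewrite ?eqxx // IH ?orbT.
Qed.

Lemma fmax_mem (A : {fset nat}) : A != fset0 -> fmax A \in A.
Proof.
case/fset0Pn => x x_A; apply: bigmax_seq_mem.
by apply/eqP => A_nil; move: x_A; rewrite -[x \in A]/(x \in enum_fset A) A_nil.
Qed.

Lemma incr_sorted (A : {fset nat}) : sorted ltn (incr A).
Proof.
rewrite ltn_sorted_uniq_leq sort_uniq fset_uniq.
by rewrite sort_sorted //; exact: leq_total.
Qed.

Lemma mem_incr (A : {fset nat}) x : (x \in incr A) = (x \in A).
Proof. exact: mem_sort. Qed.

Lemma incrE (A : {fset nat}) s : sorted ltn s -> A =i s -> incr A = s.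
Proof.
move=> sorted_s A_s; apply: (irr_sorted_eq ltn_trans ltnn) (incr_sorted A) sorted_s _.
by move=> x; rewrite mem_incr A_s.
Qed.

Lemma filter_sorted_split s a : sorted ltn s -> a \notin s ->
  [seq x <- s | x < a] ++ [seq x <- s | a < x] = s.
Proof.
move=> sorted_s a_s; have pw_s := sorted_s; rewrite (sorted_pairwise ltn_trans) in pw_s.
apply: (irr_sorted_eq ltn_trans ltnn) => //.
  rewrite (sorted_pairwise ltn_trans) pairwise_cat !(pairwise_filter _ pw_s) /= andbT.
  apply/allrelP => x y; rewrite !mem_filter => /andP [x_lt _] /andP [lt_y _].
  exact: ltn_trans lt_y.
move=> x; rewrite mem_cat !mem_filter -andb_orl.
by case: ltngtP => // x_eq; rewrite x_eq (negbTE a_s).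
Qed.

Definition col0 : column := ([::], 0).

Definition fill (n : nat) (cs : seq column) : filling :=
  [:: mkseq (fun j => [fset x in col_top (nth col0 cs j)]) (size cs);
      mkseq (fun j => [fset x in col_bot (nth col0 cs j) ++
                        if j == (size cs).-1 then [:: n] else [::]]) (size cs)].

Lemma mem_fill_top n cs j x : j < size cs ->
  (x \in cell (fill n cs) 0 j) = (x \in col_top (nth col0 cs j)).
Proof. by move=> j_lt; rewrite /cell [nth _ (fill _ _) _]/= nth_mkseq // in_fset. Qed.

Lemma mem_fill_bot n cs j x : j < size cs ->
  (x \in cell (fill n cs) 1 j) =
  (x \in col_bot (nth col0 cs j)) || (j == (size cs).-1) && (x == n).
Proof.
move=> j_lt; rewrite /cell [nth _ (fill _ _) _]/= nth_mkseq // in_fset mem_cat.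
by case: (j == _); rewrite ?inE.
Qed.

Lemma alpha_fill n cs : good_cols cs -> uniq (word cs) -> n \notin word cs ->
  alpha n (fill n cs) = word cs.
Proof.
case/andP => /allP sorted_cs _ /uniq_flatten_all /allP uniq_cs n_new.
rewrite /alpha [nth _ _ 0]/= size_mkseq /word -[in RHS](mkseq_nth col0 cs) /mkseq -map_comp.
congr flatten; apply/eq_in_map => j; rewrite mem_iota add0n => /andP [_ j_lt] /=.
have c_cs := mem_nth col0 j_lt; set c := nth col0 cs j in c_cs *.
have sorted_c := sorted_cs c c_cs.
have /= := uniq_cs (col_seq c) (map_f _ c_cs); rewrite rcons_uniq => /andP [pivot_new _].
have pivot_top : fmax (cell (fill n cs) 0 j) = c.2.
  apply: fmaxE => [|y]; rewrite mem_fill_top // mem_filter ?leqnn ?mem_col_seq ?eqxx //.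
  by case/andP.
have top_body : incr (cell (fill n cs) 0 j `\ c.2) = [seq x <- c.1 | x < c.2].
  apply: incrE => [|x]; first exact: sorted_filter ltn_trans _ _ sorted_c.
  rewrite in_fsetD1 mem_fill_top // !mem_filter mem_col_seq.
  by case: ltngtP => [||->]; rewrite ?eqxx.
have bot_body : incr (if j == (size cs).-1 then cell (fill n cs) 1 j `\ n
                      else cell (fill n cs) 1 j) = col_bot c.
  apply: incrE => [|x]; first exact: sorted_filter ltn_trans _ _ sorted_c.
  have n_bot : n \notin col_bot c.
    by apply: contra n_new; rewrite mem_col_bot => /andP [n_c _]; apply/flatten_mapP; exists c.
  case: (j =P (size cs).-1) => [_ | /eqP/negbTE j_not_last];
    rewrite ?in_fsetD1 mem_fill_bot // -/c; last by rewrite j_not_last orbF.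
  by case: (x =P n) => [-> | _]; rewrite ?(negbTE n_bot) // andbF orbF.
by rewrite pivot_top top_body bot_body catA filter_sorted_split // /col_seq cats1.
Qed.

Local Close Scope fset_scope.

Lemma in_diagram2 b r j : in_diagram [:: b; b] r j = (r < 2) && (j < b).
Proof. by case: r => [|[|r]]. Qed.

Lemma mem_wordP cs x :
  reflect (exists2 j, j < size cs & x \in col_seq (nth col0 cs j)) (x \in word cs).
Proof.
apply: (iffP flatten_mapP) => [[c /(nthP col0) [j j_lt <-]] | [j j_lt x_j]]; first by exists j.
by exists (nth col0 cs j); rewrite ?mem_nth.
Qed.

Lemma mem_word_nth cs j x : j < size cs -> x \in col_seq (nth col0 cs j) -> x \in word cs.
Proof. by move=> j_lt x_j; apply/mem_wordP; exists j. Qed.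

Lemma uniq_word_nth cs j1 j2 x : uniq (word cs) -> j1 < size cs -> j2 < size cs ->
  x \in col_seq (nth col0 cs j1) -> x \in col_seq (nth col0 cs j2) -> j1 = j2.
Proof.
elim: cs j1 j2 => // c cs IH [|j1] [|j2] //; rewrite word_cons cat_uniq.
- case/and3P => _ /hasPn c_new _ _ j2_lt x_c x_j2.
  by have := c_new x (mem_word_nth (cs := cs) j2_lt x_j2); rewrite x_c.
- case/and3P => _ /hasPn c_new _ j1_lt _ x_j1 x_c.
  by have := c_new x (mem_word_nth (cs := cs) j1_lt x_j1); rewrite x_c.
by case/and3P => _ _ uniq_cs j1_lt j2_lt x1 x2; congr S; apply: IH x1 x2.
Qed.

Lemma good_cols_before cs j j' : good_cols cs -> j < j' -> j' < size cs ->
  col_before (nth col0 cs j) (nth col0 cs j').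
Proof.
case/andP => _ /(pairwiseP col0) before j_lt_j' j'_lt.
exact: before (ltn_trans j_lt_j' j'_lt) j'_lt j_lt_j'.
Qed.

Lemma last_col_bot c : c.2 < last c.2 c.1 -> last c.2 c.1 \in col_bot c.
Proof.
move=> descent; rewrite mem_filter descent /=.
by move: (mem_last c.2 c.1); rewrite inE => /predU1P [last_eq|//]; rewrite last_eq ltnn in descent.
Qed.

Lemma sorted_le_last (s : seq nat) d y : sorted ltn s -> y \in s -> y <= last d s.
Proof.
elim: s d => // x s IH d sorted_s; rewrite inE => /predU1P [-> | y_s]; last first.
  by apply: IH y_s; apply: path_sorted sorted_s.
case: s {IH} sorted_s => // z s /(order_path_min ltn_trans) /allP x_lt.
by apply/ltnW/x_lt/mem_last.
Qed.

Lemma pivot_col_top c : c.2 \in col_top c.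
Proof. by rewrite mem_filter leqnn mem_col_seq eqxx. Qed.

Lemma mem_fill_word n cs r j x : r < 2 -> j < size cs -> x != n ->
  (x \in cell (fill n cs) r j) =
  (x \in col_seq (nth col0 cs j)) && ((r == 0) == (x <= (nth col0 cs j).2)).
Proof.
case: r => [|[|r]] // _ j_lt x_ne_n; first by rewrite mem_fill_top // mem_filter andbC.
by rewrite mem_fill_bot // (negbTE x_ne_n) andbF orbF mem_col_bot /= ltnNge.
Qed.

Lemma mem_fill_n n cs r j : n \notin word cs -> r < 2 -> j < size cs ->
  (n \in cell (fill n cs) r j) = (r == 1) && (j == (size cs).-1).
Proof.
move=> n_new; case: r => [|[|r]] // _ j_lt; last first.
  rewrite mem_fill_bot // eqxx andbT mem_col_bot.
  by case: (boolP (n \in col_seq _)) => // /(mem_word_nth j_lt); rewrite (negbTE n_new).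
rewrite mem_fill_top // mem_filter; apply: contraNF n_new => /andP [_].
exact: mem_word_nth.
Qed.

Section FillTableau.

Variables (n k : nat) (cs : seq column).
Hypotheses (good_cs : good_cols cs) (uniq_cs : uniq (word cs)) (cs_neq0 : cs != [::])
  (word_cs : forall x, (x \in word cs) = (0 < x < n)) (n_eq : 2 * size cs + k = n).

Let size_cs_pos : 0 < size cs. Proof. by rewrite lt0n size_eq0. Qed.

Lemma n_notin_word : n \notin word cs.
Proof. by rewrite word_cs ltnn andbF. Qed.

Lemma fill_cell_inj r1 j1 r2 j2 x : r1 < 2 -> j1 < size cs -> r2 < 2 -> j2 < size cs ->
  x \in cell (fill n cs) r1 j1 -> x \in cell (fill n cs) r2 j2 -> (r1, j1) = (r2, j2).
Proof.
move=> r1_lt j1_lt r2_lt j2_lt; have [-> | x_ne_n] := eqVneq x n.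
  rewrite !mem_fill_n ?n_notin_word //.
  by case/andP => /eqP -> /eqP -> /andP [/eqP -> /eqP ->].
rewrite !mem_fill_word // => /andP [x1 /eqP r1_top] /andP [x2 /eqP r2_top].
have j1_j2 := uniq_word_nth uniq_cs j1_lt j2_lt x1 x2; rewrite -j1_j2 in r2_top *.
have : (r1 == 0) = (r2 == 0) by rewrite r1_top r2_top.
by case: r1 r2 r1_lt r2_lt {r1_top r2_top} => [|[|?]] [|[|?]].
Qed.

Lemma fill_cell_neq0 r j : r < 2 -> j < size cs -> cell (fill n cs) r j != fset0.
Proof.
move=> r_lt j_lt; apply/fset0Pn; case: r r_lt => [|[|r]] // _.
  by exists (nth col0 cs j).2; rewrite mem_fill_top ?pivot_col_top.
have [j_last | j_not_last] := eqVneq j (size cs).-1.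
  by exists n; rewrite mem_fill_bot // j_last !eqxx orbT.
have j1_lt : j.+1 < size cs by move: j_lt j_not_last; lia.
have /and3P [descent _ _] := good_cols_before good_cs (ltnSn j) j1_lt.
by exists (last (nth col0 cs j).2 (nth col0 cs j).1); rewrite mem_fill_bot ?last_col_bot.
Qed.

Lemma fill_cell_range r j x : r < 2 -> j < size cs ->
  x \in cell (fill n cs) r j -> 0 < x <= n.
Proof.
move=> r_lt j_lt; have [-> _ | x_ne_n] := eqVneq x n; first by move: size_cs_pos; lia.
by rewrite mem_fill_word // => /andP [/(mem_word_nth j_lt)]; rewrite word_cs => /andP [-> /ltnW].
Qed.

Lemma fill_cover x : 0 < x <= n ->
  exists r j, [/\ r < 2, j < size cs & x \in cell (fill n cs) r j].
Proof.
case/andP => x_pos; rewrite leq_eqVlt => /predU1P [-> | x_lt_n].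
  by exists 1, (size cs).-1; rewrite mem_fill_bot ?eqxx ?orbT ?prednK.
have /mem_wordP [j j_lt x_j] : x \in word cs by rewrite word_cs x_pos.
exists ((nth col0 cs j).2 < x), j; split => //; first by rewrite ltnS leq_b1.
by rewrite mem_fill_word ?ltnS ?leq_b1 ?(ltn_eqF x_lt_n) // x_j; case: ltnP.
Qed.

Lemma fill_cell_lt r1 j1 r2 j2 x y : r1 < 2 -> j1 < size cs -> r2 < 2 -> j2 < size cs ->
  (r1, j1) <> (r2, j2) -> r1 <= r2 -> j1 <= j2 ->
  x \in cell (fill n cs) r1 j1 -> y \in cell (fill n cs) r2 j2 -> x < y.
Proof.
move=> r1_lt j1_lt r2_lt j2_lt cells_ne r12 j12 x_in y_in.
have [x_n | x_ne_n] := eqVneq x n.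
  move: x_in; rewrite x_n mem_fill_n ?n_notin_word // => /andP [/eqP r1_1 /eqP j1_last].
  by case: cells_ne; congr pair; rewrite -?r1_1 -?j1_last; lia.
have [y_n | y_ne_n] := eqVneq y n.
  have /andP [_] := fill_cell_range r1_lt j1_lt x_in.
  by rewrite y_n leq_eqVlt (negbTE x_ne_n).
move: x_in y_in; rewrite !mem_fill_word // => /andP [x_j1 /eqP x_row] /andP [y_j2 /eqP y_row].
have [j1_j2 | j1_ne_j2] := eqVneq j1 j2.
  subst j2; have r1_ne_r2 : r1 <> r2 by move=> r_eq; apply: cells_ne; rewrite r_eq.
  have [r1_0 r2_1] : r1 = 0 /\ r2 = 1 by lia.
  move: x_row y_row; rewrite r1_0 r2_1 => /esym x_top /esym /negbT; rewrite -ltnNge.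
  exact: leq_ltn_trans.
have j1_lt_j2 : j1 < j2 by rewrite ltn_neqAle j1_ne_j2.
have /and3P [_ /allP later_gt /allrelP bot_lt] := good_cols_before good_cs j1_lt_j2 j2_lt.
case: r1 r1_lt r12 x_row {cells_ne} => [|[|?]] // _.
  by move=> _ /esym x_top; apply: leq_ltn_trans x_top (later_gt y y_j2).
case: r2 r2_lt y_row => [|[|?]] // _ /esym /negbT y_bot _ /esym /negbT x_bot.
by apply: bot_lt; rewrite mem_col_bot ltnNge ?x_j1 ?y_j2.
Qed.

Lemma fill_tableau : SYTplus [:: size cs; size cs] k (fill n cs).
Proof.
split.
- by rewrite /= !size_mkseq.
- by move=> r j; rewrite in_diagram2 => /andP [r_lt j_lt]; apply: fill_cell_neq0.
- move=> r1 j1 r2 j2; rewrite !in_diagram2 => /andP [r1_lt j1_lt] /andP [r2_lt j2_lt] cells_ne.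
  apply/fsetP => x; rewrite inE; apply/negP => /andP [x1 x2].
  exact/cells_ne/(fill_cell_inj r1_lt j1_lt r2_lt j2_lt x1 x2).
- move=> x; split.
    rewrite /= addn0 addnn -mul2n n_eq => /fill_cover [r [j [r_lt j_lt x_in]]].
    by exists r, j; rewrite in_diagram2 r_lt j_lt.
  case=> r [j]; rewrite in_diagram2 => -[/andP [r_lt j_lt] /(fill_cell_range r_lt j_lt)].
  by rewrite /= addn0 addnn -mul2n n_eq.
- move=> r1 j1 r2 j2; rewrite !in_diagram2 => /andP [r1_lt j1_lt] /andP [r2_lt j2_lt].
  by move=> cells_ne r12 j12 x y; apply: fill_cell_lt.
Qed.

End FillTableau.

Lemma is_perm_of_pred n p : 0 < n ->
  is_perm_of n.-1 p <-> uniq p /\ (forall x, (x \in p) = (0 < x < n)).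
Proof.
move=> n_pos; split => [p_perm | [uniq_p mem_p]].
  split => [|x]; first by rewrite (perm_uniq p_perm) iota_uniq.
  by rewrite (perm_mem p_perm) mem_iota; apply/idP/idP; lia.
apply: uniq_perm => // [|x]; first exact: iota_uniq.
by rewrite mem_p mem_iota; apply/idP/idP; lia.
Qed.

Lemma fill_cols_of n p : 2 <= n -> is_perm_of n.-1 p -> avoids321 p ->
  let b := size (cols_of p) in
  [/\ 1 <= b, 2 * b + (n - 2 * b) = n, SYTplus [:: b; b] (n - 2 * b) (fill n (cols_of p))
    & alpha n (fill n (cols_of p)) = p].
Proof.
move=> n_ge2 /(is_perm_of_pred _ (ltnW n_ge2)) [uniq_p mem_p] avoid_p b.
have good_cs := good_cols_of uniq_p avoid_p; have word_cs := word_cols_of p.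
have size_p : size p = n.-1.
  by rewrite -(size_iota 1 n.-1); apply/perm_size/(is_perm_of_pred _ (ltnW n_ge2)).
have cs_neq0 : cols_of p != [::].
  by apply/eqP => cs_nil; move: size_p; rewrite -word_cs cs_nil /=; lia.
have := size_word_good good_cs; rewrite word_cs size_p => size_cs.
split; first by rewrite lt0n size_eq0.
- by rewrite /b; lia.
- by apply: fill_tableau; rewrite ?word_cs // /b; lia.
by rewrite alpha_fill ?word_cs // mem_p ltnn andbF.
Qed.

(** * Columns from tableaux *)

Lemma uniq_word_of_nth cs :
  (forall j, j < size cs -> uniq (col_seq (nth col0 cs j))) ->
  (forall j1 j2 x, j1 < size cs -> j2 < size cs ->
     x \in col_seq (nth col0 cs j1) -> x \in col_seq (nth col0 cs j2) -> j1 = j2) ->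
  uniq (word cs).
Proof.
elim: cs => // c cs IH uniq_cols disj; rewrite word_cons cat_uniq (uniq_cols 0) //=.
rewrite IH; last 2 first.
- by move=> j; apply: (uniq_cols j.+1).
- by move=> j1 j2 x j1_lt j2_lt x1 x2; have [] := disj j1.+1 j2.+1 x j1_lt j2_lt x1 x2.
rewrite andbT; apply/hasPn => x /mem_wordP [j j_lt x_j]; apply/negP => x_c.
by have := disj 0 j.+1 x isT j_lt x_c x_j.
Qed.

Lemma good_cols_of_nth cs :
  (forall j, j < size cs -> sorted ltn (nth col0 cs j).1) ->
  (forall j j', j < j' -> j' < size cs -> col_before (nth col0 cs j) (nth col0 cs j')) ->
  good_cols cs.
Proof.
move=> sorted_cs before_cs; apply/andP; split; first exact/(all_nthP col0).
by apply/(pairwiseP col0) => j j' j_lt j'_lt j_lt_j'; apply: before_cs.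
Qed.

Definition tableau_col (n : nat) (T : filling) (j : nat) : column :=
  (incr (cell T 0 j `\ fmax (cell T 0 j))%fset ++ incr (cell T 1 j `\ n)%fset,
   fmax (cell T 0 j)).

Definition tableau_cols (n b : nat) (T : filling) : seq column := mkseq (tableau_col n T) b.

Lemma size_tableau_cols n b T : size (tableau_cols n b T) = b.
Proof. exact: size_mkseq. Qed.

Lemma eq_two_row_filling b (T1 T2 : filling) :
  map size T1 = [:: b; b] -> map size T2 = [:: b; b] ->
  (forall r j, r < 2 -> j < b -> cell T1 r j = cell T2 r j) -> T1 = T2.
Proof.
case: T1 => [|R0 [|R1 [|? ?]]] // [size0 size1]; case: T2 => [|S0 [|S1 [|? ?]]] // [size0' size1'].
move=> cells; congr [:: _; _]; apply: (@eq_from_nth _ fset0);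
  rewrite ?size0 ?size1 ?size0' ?size1' //.
  by move=> j j_lt; apply: (cells 0 j).
by move=> j j_lt; apply: (cells 1 j).
Qed.

Section TableauCols.

Variables (n b k : nat) (T : filling).
Hypotheses (b_pos : 0 < b) (n_eq : 2 * b + k = n) (T_syt : SYTplus [:: b; b] k T).

Let n_sum : n = sumn [:: b; b] + k.
Proof. by rewrite -n_eq /= addn0 addnn -mul2n. Qed.

Let pred_b_lt : b.-1 < b.
Proof. by rewrite prednK. Qed.

Lemma syt_cell_neq0 r j : r < 2 -> j < b -> cell T r j != fset0.
Proof. by case: T_syt => _ neq0 _ _ _ r_lt j_lt; apply: neq0; rewrite in_diagram2 r_lt. Qed.

Lemma syt_cell_inj r1 j1 r2 j2 x : r1 < 2 -> j1 < b -> r2 < 2 -> j2 < b ->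
  x \in cell T r1 j1 -> x \in cell T r2 j2 -> (r1, j1) = (r2, j2).
Proof.
case: T_syt => _ _ disj _ _ r1_lt j1_lt r2_lt j2_lt x1 x2.
have [//|/eqP cells_ne] := eqVneq (r1, j1) (r2, j2).
have := disj r1 j1 r2 j2; rewrite !in_diagram2 r1_lt j1_lt r2_lt j2_lt.
by move=> /(_ isT isT cells_ne) /fsetP /(_ x); rewrite inE x1 x2 in_fset0.
Qed.

Lemma syt_cell_range r j x : r < 2 -> j < b -> x \in cell T r j -> 0 < x <= n.
Proof.
case: T_syt => _ _ _ cover _ r_lt j_lt x_in.
by rewrite n_sum; apply/(cover x); exists r, j; rewrite in_diagram2 r_lt j_lt.
Qed.

Lemma syt_cover x : 0 < x <= n -> exists r j, [/\ r < 2, j < b & x \in cell T r j].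
Proof.
case: T_syt => _ _ _ cover _; rewrite n_sum => /(cover x) [r [j []]].
by rewrite in_diagram2 => /andP [r_lt j_lt] x_in; exists r, j.
Qed.

Lemma syt_cell_lt r1 j1 r2 j2 x y : r1 < 2 -> j1 < b -> r2 < 2 -> j2 < b ->
  (r1, j1) <> (r2, j2) -> r1 <= r2 -> j1 <= j2 ->
  x \in cell T r1 j1 -> y \in cell T r2 j2 -> x < y.
Proof.
case: T_syt => _ _ _ _ nw r1_lt j1_lt r2_lt j2_lt cells_ne r12 j12.
by apply: (nw r1 j1 r2 j2 _ _ cells_ne r12 j12); rewrite in_diagram2 ?r1_lt ?r2_lt.
Qed.

Lemma syt_n_corner : n \in cell T 1 b.-1.
Proof.
have [r [j [r_lt j_lt n_in]]] : exists r j, [/\ r < 2, j < b & n \in cell T r j].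
  by apply: syt_cover; rewrite -n_eq; lia.
have [corner | not_corner] := eqVneq (r, j) (1, b.-1); first by case: corner n_in => -> ->.
case/fset0Pn: (syt_cell_neq0 (ltnSn 1) pred_b_lt) => y y_in.
have /andP [_ y_le_n] := syt_cell_range (ltnSn 1) pred_b_lt y_in.
have n_lt_y : n < y.
  by apply: (syt_cell_lt r_lt j_lt (ltnSn 1) pred_b_lt (elimN eqP not_corner)) n_in y_in; lia.
by rewrite ltnNge y_le_n in n_lt_y.
Qed.

Lemma syt_n_cell r j : r < 2 -> j < b -> (n \in cell T r j) = (r == 1) && (j == b.-1).
Proof.
move=> r_lt j_lt; apply/idP/andP => [n_in | [/eqP -> /eqP ->]]; last exact: syt_n_corner.
by case: (syt_cell_inj r_lt j_lt (ltnSn 1) pred_b_lt n_in syt_n_corner) => -> ->.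
Qed.

Lemma syt_top_lt_bot j x y : j < b -> x \in cell T 0 j -> y \in cell T 1 j -> x < y.
Proof. by move=> j_lt; apply: syt_cell_lt. Qed.

Lemma tableau_pivot_mem j : j < b -> fmax (cell T 0 j) \in cell T 0 j.
Proof. by move=> j_lt; apply/fmax_mem/syt_cell_neq0. Qed.

Lemma mem_tableau_body j x : (x \in (tableau_col n T j).1) =
  (x \in cell T 0 j) && (x != fmax (cell T 0 j)) || (x \in cell T 1 j) && (x != n).
Proof. by rewrite mem_cat !mem_incr !in_fsetD1 andbC (andbC (x != n)). Qed.

Lemma mem_tableau_col j x : j < b ->
  (x \in col_seq (tableau_col n T j)) = (x \in cell T 0 j) || (x \in cell T 1 j) && (x != n).
Proof.
move=> j_lt; rewrite mem_col_seq mem_tableau_body.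
by case: eqP => [-> | _]; rewrite ?tableau_pivot_mem ?andbT.
Qed.

Lemma tableau_col_top j x : j < b -> (x \in col_top (tableau_col n T j)) = (x \in cell T 0 j).
Proof.
move=> j_lt; rewrite mem_filter mem_tableau_col //.
have [x_A | _] := boolP (x \in cell T 0 j); first by rewrite fmax_ge.
apply/negbTE/negP => /andP [x_le /andP [x_B _]].
by have := syt_top_lt_bot j_lt (tableau_pivot_mem j_lt) x_B; rewrite ltnNge x_le.
Qed.

Lemma tableau_col_bot j x : j < b ->
  (x \in col_bot (tableau_col n T j)) = (x \in cell T 1 j) && (x != n).
Proof.
move=> j_lt; rewrite mem_col_bot mem_tableau_col //.
have [x_A | _] := boolP (x \in cell T 0 j).
  rewrite /= ltnNge fmax_ge //; apply/esym/negbTE/negP => /andP [x_B _].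
  by case: (syt_cell_inj (ltn0Sn 1) j_lt (ltnSn 1) j_lt x_A x_B).
have [x_B | _] := boolP (x \in cell T 1 j); rewrite ?andbF //=.
by rewrite (syt_top_lt_bot j_lt (tableau_pivot_mem j_lt) x_B) andbT.
Qed.

Lemma tableau_col_sorted j : j < b -> sorted ltn (tableau_col n T j).1.
Proof.
have pairwise_incr (A : {fset nat}) : pairwise ltn (incr A).
  by rewrite -(sorted_pairwise ltn_trans) incr_sorted.
move=> j_lt; rewrite (sorted_pairwise ltn_trans) pairwise_cat.
apply/and3P; split; try exact: pairwise_incr.
apply/allrelP => x y; rewrite !mem_incr !in_fsetD1 => /andP [_ x_A] /andP [_ y_B].
exact: syt_top_lt_bot x_A y_B.
Qed.

Lemma tableau_cols_good : good_cols (tableau_cols n b T).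
Proof.
apply: good_cols_of_nth => [j | j j' j_lt_j']; rewrite size_mkseq => j_lt.
  by rewrite nth_mkseq ?tableau_col_sorted.
have j_lt' : j < b := ltn_trans j_lt_j' j_lt.
have cells_ne (r r' : nat) : (r, j) <> (r', j') by case=> _ j_eq; rewrite j_eq ltnn in j_lt_j'.
rewrite !nth_mkseq //; apply/and3P; split.
- case/fset0Pn: (syt_cell_neq0 (ltnSn 1) j_lt') => y y_B.
  have : y \in col_bot (tableau_col n T j).
    rewrite tableau_col_bot // y_B; apply: contraTneq y_B => ->.
    by rewrite syt_n_cell //=; move: j_lt_j' j_lt; lia.
  rewrite mem_filter => /andP [lt_y y_body].
  exact: leq_trans lt_y (sorted_le_last _ (tableau_col_sorted j_lt') y_body).
- apply/allP => y; rewrite mem_tableau_col // => /orP [y_A | /andP [y_B _]].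
    exact: syt_cell_lt (ltn0Sn 1) j_lt' (ltn0Sn 1) j_lt (cells_ne 0 0) (leqnn 0)
             (ltnW j_lt_j') (tableau_pivot_mem j_lt') y_A.
  exact: syt_cell_lt (ltn0Sn 1) j_lt' (ltnSn 1) j_lt (cells_ne 0 1) (leq0n 1)
           (ltnW j_lt_j') (tableau_pivot_mem j_lt') y_B.
apply/allrelP => x y; rewrite !tableau_col_bot // => /andP [x_B _] /andP [y_B _].
exact: syt_cell_lt (ltnSn 1) j_lt' (ltnSn 1) j_lt (cells_ne 1 1) (leqnn 1) (ltnW j_lt_j') x_B y_B.
Qed.

Lemma tableau_cols_uniq : uniq (word (tableau_cols n b T)).
Proof.
apply: uniq_word_of_nth => [j | j1 j2 x]; rewrite size_mkseq => j_lt.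
  rewrite nth_mkseq // /col_seq rcons_uniq (sorted_uniq ltn_trans ltnn (tableau_col_sorted j_lt)).
  rewrite mem_tableau_body eqxx andbF /= andbT; apply/negP => /andP [pivot_B _].
  by case: (syt_cell_inj (ltn0Sn 1) j_lt (ltnSn 1) j_lt (tableau_pivot_mem j_lt) pivot_B).
move=> j2_lt; rewrite !nth_mkseq // !mem_tableau_col //.
have in_row j' : (x \in cell T 0 j') || (x \in cell T 1 j') && (x != n) ->
    exists2 r, r < 2 & x \in cell T r j'.
  by case/orP => [x_A | /andP [x_B _]]; [exists 0 | exists 1].
move=> /in_row [r1 r1_lt x1] /in_row [r2 r2_lt x2].
by case: (syt_cell_inj r1_lt j_lt r2_lt j2_lt x1 x2).
Qed.

Lemma tableau_cols_word x : (x \in word (tableau_cols n b T)) = (0 < x < n).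
Proof.
apply/mem_wordP/idP => [[j] | /andP [x_pos x_lt_n]]; rewrite size_mkseq.
  move=> j_lt; rewrite nth_mkseq // mem_tableau_col // => /orP [x_A | /andP [x_B x_ne_n]].
    have /andP [-> x_le_n] := syt_cell_range (ltn0Sn 1) j_lt x_A.
    by rewrite ltn_neqAle x_le_n andbT; apply: contraTneq x_A => ->; rewrite syt_n_cell.
  by have /andP [-> x_le_n] := syt_cell_range (ltnSn 1) j_lt x_B; rewrite ltn_neqAle x_ne_n.
have [r [j [r_lt j_lt x_in]]] := syt_cover (introT andP (conj x_pos (ltnW x_lt_n))).
exists j => //; rewrite nth_mkseq // mem_tableau_col // (ltn_eqF x_lt_n) andbT.
by case: r r_lt x_in => [|[|?]] // _ ->; rewrite ?orbT.
Qed.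

Lemma tableau_colsK : fill n (tableau_cols n b T) = T.
Proof.
case: T_syt => shape _ _ _ _; apply: (eq_two_row_filling (b := b)) => //.
  by rewrite /= !size_mkseq.
have size_cs : size (tableau_cols n b T) = b by rewrite size_mkseq.
move=> [|[|r]] // j _ j_lt; apply/fsetP => x.
  by rewrite mem_fill_top ?size_cs // nth_mkseq ?tableau_col_top.
rewrite mem_fill_bot ?size_cs // nth_mkseq // tableau_col_bot //.
have [-> | _] := eqVneq x n; last by rewrite andbT andbF orbF.
by rewrite andbF andbT syt_n_cell.
Qed.

Lemma tableau_cols_top x :
  (exists j, j < b /\ x \in cell T 0 j) <-> has (fun c => x \in col_top c) (tableau_cols n b T).
Proof.
rewrite has_map; split => [[j [j_lt x_A]] | /hasP [j]].
  by apply/hasP; exists j; rewrite ?mem_iota //= tableau_col_top.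
by rewrite mem_iota /= => j_lt; rewrite tableau_col_top //; exists j.
Qed.

End TableauCols.

Lemma tableau_colsP n b k T : 0 < b -> 2 * b + k = n -> SYTplus [:: b; b] k T ->
  let cs := tableau_cols n b T in
  [/\ good_cols cs, uniq (word cs), forall x, (x \in word cs) = (0 < x < n),
      fill n cs = T & alpha n T = word cs].
Proof.
move=> b_pos n_eq T_syt cs.
have good_cs : good_cols cs := tableau_cols_good b_pos n_eq T_syt.
have uniq_cs : uniq (word cs) := tableau_cols_uniq n T_syt.
have word_cs := tableau_cols_word b_pos n_eq T_syt.
have fill_cs : fill n cs = T := tableau_colsK b_pos n_eq T_syt.
by split => //; rewrite -[in LHS]fill_cs alpha_fill // word_cs ltnn andbF.
Qed.

Theorem theorem7 (n : nat) (hn : 2 <= n) :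
  [/\ (forall (b k : nat) (T : filling), 1 <= b -> 2 * b + k = n ->
         SYTplus [:: b; b] k T ->
         is_perm_of n.-1 (alpha n T) /\ avoids321 (alpha n T)),
      (forall (b1 k1 : nat) (T1 : filling) (b2 k2 : nat) (T2 : filling),
         1 <= b1 -> 2 * b1 + k1 = n -> SYTplus [:: b1; b1] k1 T1 ->
         1 <= b2 -> 2 * b2 + k2 = n -> SYTplus [:: b2; b2] k2 T2 ->
         alpha n T1 = alpha n T2 -> (b1, k1, T1) = (b2, k2, T2)),
      (forall p : seq nat, is_perm_of n.-1 p -> avoids321 p ->
         exists (b k : nat) (T : filling), [/\ 1 <= b, 2 * b + k = n,
           SYTplus [:: b; b] k T & alpha n T = p]),
      (forall (b k : nat) (T : filling), 1 <= b -> 2 * b + k = n ->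
         SYTplus [:: b; b] k T ->
         forall x : nat, (exists c, c < b /\ x \in cell T 0 c) <->
                         x \in rl_minima (alpha n T))
    & (forall (b k : nat) (T : filling), 1 <= b -> 2 * b + k = n ->
         SYTplus [:: b; b] k T -> inner_valleys (alpha n T) = b - 1)].
Proof.
have n_pos : 0 < n by apply: ltn_trans hn.
split.
- move=> b k T b_pos n_eq T_syt.
  have [good_cs uniq_cs word_cs _ ->] := tableau_colsP b_pos n_eq T_syt.
  by split; [apply/is_perm_of_pred | apply: avoids321_word].
- move=> b1 k1 T1 b2 k2 T2 b1_pos n_eq1 T1_syt b2_pos n_eq2 T2_syt.
  have [good1 _ _ fill1 ->] := tableau_colsP b1_pos n_eq1 T1_syt.
  have [good2 _ _ fill2 -> words_eq] := tableau_colsP b2_pos n_eq2 T2_syt.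
  have cols_eq : tableau_cols n b1 T1 = tableau_cols n b2 T2.
    by rewrite -(cols_of_word good1) -(cols_of_word good2) words_eq.
  have b_eq : b1 = b2 by rewrite -(size_tableau_cols n b1 T1) cols_eq size_tableau_cols.
  have k_eq : k1 = k2 by lia.
  by rewrite -fill1 -fill2 cols_eq b_eq k_eq.
- move=> p p_perm avoid_p; have [b_pos n_eq T_syt alpha_T] := fill_cols_of hn p_perm avoid_p.
  by exists (size (cols_of p)), (n - 2 * size (cols_of p)), (fill n (cols_of p)).
- move=> b k T b_pos n_eq T_syt x.
  have [good_cs uniq_cs _ _ ->] := tableau_colsP b_pos n_eq T_syt.
  by rewrite rl_minima_word //; exact: (tableau_cols_top n T_syt x).
move=> b k T b_pos n_eq T_syt.
have [good_cs _ _ _ ->] := tableau_colsP b_pos n_eq T_syt.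
by rewrite inner_valleysE valleys_word // size_tableau_cols subn1.
Qed.
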